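(* Let $F=SU(3)/T_{SU(3)}$ and let $z_1,z_2\in H^2(F;\mathbb{C})$ be non-zero with $z_1\cdot z_2=0$. Then there are $\lambda_1,\lambda_2\in\mathbb{C}^*$ such that either $z_1=\lambda_1x_+$ and $z_2=\lambda_2x_-$, or $z_1=\lambda_1x_-$ and $z_2=\lambda_2x_+$, where $x_\pm:=x_1+\tfrac12(1\pm\sqrt{-3})\,x_2$.
   Context: $T_{SU(3)}$ is the maximal torus of diagonal matrices in $SU(3)$, and $H^*(F;\mathbb{C})$ is identified with $\mathbb{C}[x_1,x_2]/(x_1^2+x_2^2+x_1x_2,\;x_1^2x_2+x_1x_2^2)$, $x_1,x_2$ of degree $2$. *)

From HB Require Import structures.
From mathcomp Require Import all_boot all_order all_algebra.
From mathcomp Require Import mpoly.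
Set Implicit Arguments. Unset Strict Implicit. Unset Printing Implicit Defensive.
Import Order.TTheory GRing.Theory Num.Theory.
Local Open Scope ring_scope.

(* Model of H^*(SU(3)/T;C) = C[x1,x2]/(x1^2+x2^2+x1x2, x1^2x2+x1x2^2),
   with x1 = 'X_0, x2 = 'X_1 in {mpoly C[2]} (polynomial degree 1 = cohomological degree 2). *)

Definition x1 {C : numClosedFieldType} : {mpoly C[2]} := 'X_(0 : 'I_2).
Definition x2 {C : numClosedFieldType} : {mpoly C[2]} := 'X_(1 : 'I_2).

Definition rel1 {C : numClosedFieldType} : {mpoly C[2]} :=
  x1 ^+ 2 + x2 ^+ 2 + x1 * x2.
Definition rel2 {C : numClosedFieldType} : {mpoly C[2]} :=
  x1 ^+ 2 * x2 + x1 * x2 ^+ 2.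

Definition in_rel_ideal {C : numClosedFieldType} (p : {mpoly C[2]}) : Prop :=
  exists q r : {mpoly C[2]}, p = q * rel1 + r * rel2.

(* Equality in the quotient ring H^*(F;C). *)
Definition coh_eq {C : numClosedFieldType} (p q : {mpoly C[2]}) : Prop :=
  in_rel_ideal (p - q).

(* Classes of H^2(F;C): represented by homogeneous polynomials of degree 1. *)
Definition isH2 {C : numClosedFieldType} (p : {mpoly C[2]}) : bool :=
  p \is 1.-homog.

Definition x_plus {C : numClosedFieldType} : {mpoly C[2]} :=
  x1 + ((1 + sqrtC (-3 : C)) / 2) *: x2.
Definition x_minus {C : numClosedFieldType} : {mpoly C[2]} :=
  x1 + ((1 - sqrtC (-3 : C)) / 2) *: x2.

From HB Require Import structures.
From mathcomp Require Import all_boot all_order all_algebra.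
From mathcomp Require Import mpoly ring.
Set Implicit Arguments. Unset Strict Implicit. Unset Printing Implicit Defensive.
Import Order.TTheory GRing.Theory Num.Theory.
Local Open Scope ring_scope.

(* Write z1 = a x1 + b x2 and z2 = c x1 + d x2. Both relations vanish to order
   two at the origin and rel2 is cubic, so the Hessian at the origin of any
   element of the ideal (rel1, rel2) is a multiple k of that of rel1. For z1 z2
   this reads ac = bd = ad + bc = k, i.e. (aX + bY)(cX + dY) = k(X^2 + XY + Y^2).
   As z1, z2 are nonzero, k is nonzero and b/a, d/c are the two roots
   (1 +- sqrt(-3))/2 of t^2 - t + 1. *)

Lemma dhomog1E (R : comNzRingType) (n : nat) (p : {mpoly R[n]}) :
  p \is 1.-homog -> p = \sum_i p@_U_(i) *: 'X_i.
Proof.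
move=> p1; apply/mpolyP => m; rewrite raddf_sum /=.
under eq_bigr => i _ do rewrite mcoeffZ mcoeffX.
have [/mdeg1P [j /eqP ->]|m_not1] := boolP (mdeg m == 1%N).
  rewrite (bigD1 j) //= eqxx mulr1 big1 ?addr0 // => i ij.
  by rewrite eq_mnm1 (negbTE ij) mulr0.
rewrite (dhomog_nemf_coeff p1 m_not1) big1 // => i _.
have [im|] := eqVneq U_(i)%MM m; last by rewrite mulr0.
by rewrite -im mdeg1 in m_not1.
Qed.

Lemma mpolyX_dhomog1 (R : comNzRingType) (n : nat) (i : 'I_n) :
  ('X_i : {mpoly R[n]}) \is 1.-homog.
Proof. by rewrite dhomogX; apply/eqP; exact: mdeg1. Qed.

Lemma mcoeffXU (R : comNzRingType) (n : nat) (i j : 'I_n) :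
  ('X_i : {mpoly R[n]})@_U_(j) = (i == j)%:R.
Proof. by rewrite mcoeffX eq_mnm1. Qed.

Section HessianAtOrigin.
Variables (R : comNzRingType) (n : nat).
Implicit Types (p q u v : {mpoly R[n]}) (i j : 'I_n).
Local Notation ev0 := (meval (fun=> 0)).

Definition hess0 p i j := ev0 p^`M(i)^`M(j).

Definition vanishes_to_order2 p := ev0 p = 0 /\ forall i, ev0 p^`M(i) = 0.

Lemma hess0D p q i j : hess0 (p + q) i j = hess0 p i j + hess0 q i j.
Proof. by rewrite /hess0 !mderivD mevalD. Qed.

Lemma hess0M u v i j :
  hess0 (u * v) i j = hess0 u i j * ev0 v + ev0 u^`M(i) * ev0 v^`M(j)
                      + ev0 u^`M(j) * ev0 v^`M(i) + ev0 u * hess0 v i j.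
Proof. by rewrite /hess0 !(mderivM, mderivD, mevalD, mevalM) addrA. Qed.

Lemma vanishes_to_order2M u v : ev0 u = 0 -> ev0 v = 0 -> vanishes_to_order2 (u * v).
Proof.
move=> u0 v0; split=> [|i]; first by rewrite mevalM u0 mul0r.
by rewrite mderivM mevalD !mevalM u0 v0 !(mulr0, mul0r) addr0.
Qed.

Lemma vanishes_to_order2D p q :
  vanishes_to_order2 p -> vanishes_to_order2 q -> vanishes_to_order2 (p + q).
Proof.
move=> [p0 p1] [q0 q1]; split=> [|i]; first by rewrite mevalD p0 q0 addr0.
by rewrite mderivD mevalD p1 q1 addr0.
Qed.

Lemma hess0_mul_order2 q p i j :
  vanishes_to_order2 p -> hess0 (q * p) i j = ev0 q * hess0 p i j.
Proof. by move=> [p0 p1]; rewrite hess0M p0 !p1 !mulr0 !add0r. Qed.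

Lemma ev0_dhomog1 p : p \is 1.-homog -> ev0 p = 0.
Proof.
move=> /dhomog1E ->; rewrite raddf_sum /= big1 // => i _.
by rewrite mevalZ mevalXU mulr0.
Qed.

Lemma mderiv_dhomog1 p j : p \is 1.-homog -> p^`M(j) = (p@_U_(j))%:MP.
Proof.
move=> /dhomog1E {1}->; rewrite linear_sum (bigD1 j) //= big1 => [|i ij].
  rewrite mderivZ mderivX mnm1E eqxx.
  have -> : (U_(j) - U_(j) = 0)%MM by rewrite -{1}(add0m U_(j)%MM) addmK.
  by rewrite mpolyX0 scale1r addr0 alg_mpolyC.
by rewrite mderivZ mderivX mnm1E (negbTE ij) scale0r scaler0.
Qed.

Lemma hess0_mul_dhomog1 u v i j : u \is 1.-homog -> v \is 1.-homog ->
  hess0 (u * v) i j = u@_U_(i) * v@_U_(j) + u@_U_(j) * v@_U_(i).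
Proof.
move=> u1 v1; rewrite hess0M !mderiv_dhomog1 // !mevalC !ev0_dhomog1 //.
by rewrite mulr0 mul0r add0r addr0.
Qed.

End HessianAtOrigin.

Section EisensteinForm.
Variable F : numFieldType.

Lemma root_sqr_sub_add1 (s w : F) : s ^+ 2 = -3 -> w ^+ 2 - w + 1 = 0 ->
  w = (1 + s) / 2 \/ w = (1 - s) / 2.
Proof.
move=> s2 w0.
have : (w - (1 + s) / 2) * (w - (1 - s) / 2) = 0.
  rewrite -w0; have -> : (w - (1 + s) / 2) * (w - (1 - s) / 2) =
    w ^+ 2 - w + (1 - s ^+ 2) / 4 by field.
  by rewrite s2; congr (_ + _); field.
by move/eqP; rewrite mulf_eq0 !subr_eq0 => /orP[] /eqP; [left|right].
Qed.

Lemma linear_factors_norm_form (a b c d k : F) :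
  a * c = k -> b * d = k -> a * d + b * c = k ->
  (a != 0) || (b != 0) -> (c != 0) || (d != 0) ->
  [/\ a != 0, c != 0 & exists2 w, w ^+ 2 - w + 1 = 0 & b = a * w /\ d = c * (1 - w)].
Proof.
move=> ac bd adbc ab0 cd0.
have k0 : k != 0.
  apply/eqP => k0; rewrite {}k0 in ac bd adbc; have [a0|a0] := eqVneq a 0.
    have b0 : b != 0 by move: ab0; rewrite a0 eqxx.
    have d0 : d = 0 by move/eqP: bd; rewrite mulf_eq0 (negbTE b0) => /eqP.
    have c0 : c = 0.
      by move/eqP: adbc; rewrite a0 mul0r add0r mulf_eq0 (negbTE b0) => /eqP.
    by move: cd0; rewrite c0 d0 eqxx.
  have c0 : c = 0 by move/eqP: ac; rewrite mulf_eq0 (negbTE a0) => /eqP.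
  have d0 : d != 0 by move: cd0; rewrite c0 eqxx.
  have b0 : b = 0 by move/eqP: bd; rewrite mulf_eq0 (negbTE d0) orbF => /eqP.
  by move/eqP: adbc; rewrite b0 mul0r addr0 mulf_eq0 (negbTE a0) (negbTE d0).
move: (k0); rewrite -ac mulf_eq0 negb_or => /andP[a0 c0].
have ad : a * d = c * (a - b).
  by rewrite mulrBr (mulrC c a) ac -adbc; ring.
have bE : b = a * (b / a) by rewrite mulrC divfK.
have dE : d = c * (1 - b / a) by apply: (mulfI a0); rewrite ad; field.
split=> //; exists (b / a) => //.
have : a * c * ((b / a) ^+ 2 - b / a + 1) = 0.
  rewrite (_ : _ * _ = a * c - a * (b / a) * (c * (1 - b / a))); last by ring.
  by rewrite -bE -dE ac bd subrr.
by move/eqP; rewrite !mulf_eq0 (negbTE a0) (negbTE c0) => /eqP.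
Qed.

End EisensteinForm.

Section FlagCohomology.
Variable C : numClosedFieldType.
Implicit Types (p u v : {mpoly C[2]}) (i j : 'I_2).

Lemma coh_eq_refl p : coh_eq p p.
Proof. by exists 0, 0; rewrite subrr !mul0r addr0. Qed.

Lemma dhomog1_2E p : p \is 1.-homog -> p = p@_U_(0) *: x1 + p@_U_(1) *: x2.
Proof. by move=> /dhomog1E {1}->; rewrite !big_ord_recl big_ord0 addr0. Qed.

Lemma hess0_rel1 i j : hess0 (rel1 : {mpoly C[2]}) i j = (i == j)%:R + 1.
Proof.
rewrite /rel1 !expr2 !hess0D !hess0_mul_dhomog1 ?mpolyX_dhomog1 // !mcoeffXU.
by case: i j => [[|[|?]] ?] [[|[|?]] ?] //; rewrite !eqE /= ?(mulr1, mulr0, addr0, add0r).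
Qed.

Lemma hess0_rel_ideal p : in_rel_ideal p ->
  exists k, forall i j, hess0 p i j = k * hess0 rel1 i j.
Proof.
have X0 i : meval (fun=> 0) ('X_i : {mpoly C[2]}) = 0.
  exact/ev0_dhomog1/mpolyX_dhomog1.
have rel1_flat : vanishes_to_order2 (rel1 : {mpoly C[2]}).
  by rewrite /rel1 !expr2; repeat apply: vanishes_to_order2D;
    apply: vanishes_to_order2M; apply: X0.
have x12_flat : vanishes_to_order2 (x1 * x2 : {mpoly C[2]}).
  exact: vanishes_to_order2M (X0 0) (X0 1).
have rel2E : rel2 = (x1 + x2) * (x1 * x2) :> {mpoly C[2]} by rewrite /rel2; ring.
have sum0 : meval (fun=> 0) (x1 + x2 : {mpoly C[2]}) = 0.
  by rewrite mevalD !X0 addr0.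
have rel2_flat : vanishes_to_order2 (rel2 : {mpoly C[2]}).
  by rewrite rel2E; exact: vanishes_to_order2M sum0 x12_flat.1.
case=> q [r ->]; exists (meval (fun=> 0) q) => i j.
rewrite hess0D !hess0_mul_order2 // rel2E hess0_mul_order2 //.
by rewrite sum0 !(mul0r, mulr0, addr0).
Qed.

Lemma mul_dhomog1_in_rel_ideal u v :
  u \is 1.-homog -> v \is 1.-homog -> in_rel_ideal (u * v) ->
  exists k, [/\ u@_U_(0) * v@_U_(0) = k, u@_U_(1) * v@_U_(1) = k
              & u@_U_(0) * v@_U_(1) + u@_U_(1) * v@_U_(0) = k].
Proof.
move=> u1 v1 /hess0_rel_ideal [k hk]; exists k.
have halve (x : C) : x + x = k * (1 + 1) -> x = k.
  by rewrite mulrDr mulr1 -!mulr2n => /eqP; rewrite eqrMn2r => /eqP.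
move: (hk 0 0) (hk 1 1) (hk 0 1); rewrite !hess0_mul_dhomog1 // !hess0_rel1 !eqE /=.
by move=> /halve ? /halve ?; rewrite add0r mulr1.
Qed.

Lemma dhomog1_coh_neq0 p : p \is 1.-homog -> ~ coh_eq p 0 ->
  (p@_U_(0) != 0) || (p@_U_(1) != 0).
Proof.
move=> p1; apply: contra_notT; rewrite negb_or !negbK => /andP[/eqP p0 /eqP p1'].
by rewrite (dhomog1_2E p1) p0 p1' !scale0r addr0; apply: coh_eq_refl.
Qed.

Lemma coh_eq_dhomog1_scale p t : p \is 1.-homog -> p@_U_(1) = p@_U_(0) * t ->
  coh_eq p (p@_U_(0) *: (x1 + t *: x2)).
Proof.
by move=> p1 pt; rewrite {1}(dhomog1_2E p1) pt scalerDr scalerA; apply: coh_eq_refl.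
Qed.

End FlagCohomology.

Theorem lemma4p3 (C : numClosedFieldType) (z1 z2 : {mpoly C[2]}) :
  isH2 z1 -> isH2 z2 ->
  ~ coh_eq z1 0 -> ~ coh_eq z2 0 ->
  coh_eq (z1 * z2) 0 ->
  exists l1 l2 : C, l1 != 0 /\ l2 != 0 /\
    ((coh_eq z1 (l1 *: x_plus) /\ coh_eq z2 (l2 *: x_minus)) \/
     (coh_eq z1 (l1 *: x_minus) /\ coh_eq z2 (l2 *: x_plus))).
Proof.
move=> z1h z2h nz1 nz2; rewrite /coh_eq subr0.
move=> /(mul_dhomog1_in_rel_ideal z1h z2h) [k [ac bd adbc]].
have [a0 c0 [w w0 [bE dE]]] := linear_factors_norm_form ac bd adbc
  (dhomog1_coh_neq0 z1h nz1) (dhomog1_coh_neq0 z2h nz2).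
exists z1@_U_(0), z2@_U_(0); do 2 split=> //.
have [wE|wE] := root_sqr_sub_add1 (sqrtCK (-3 : C)) w0; rewrite wE in bE dE;
  [left|right]; split; apply: coh_eq_dhomog1_scale => //;
  by rewrite dE; congr (_ * _); field.
Qed.
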